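(* A double category $\mathbb{A}$ is cofibrant in the model structure on $\mathrm{DblCat}$ right-induced along $(\mathbf{H},\mathcal{V})$ from two copies of the Lack model structure if and only if its underlying horizontal category $U\mathbf{H}\mathbb{A}$ is free (on a graph) and its underlying vertical category $U\mathbf{V}\mathbb{A}$ is a disjoint union of copies of $\mathbbm{1}$ and $\mathbbm{2}$.
   Context: The model structure on $\mathrm{DblCat}$ in question has weak equivalences the double functors $F$ with $\mathbf{H}F$ and $\mathcal{V}F$ biequivalences and fibrations those with $\mathbf{H}F$, $\mathcal{V}F$ Lack fibrations ($\mathbf{H}$: underlying horizontal 2-category; $\mathcal{V}$: 2-category of vertical morphisms, squares, and pairs of globular squares as 2-cells). Its trivial fibrations are the double functors surjective on objects, full on horizontal morphisms, surjective on vertical morphisms, and fully faithful on squares; cofibrant means $\emptyset\to\mathbb{A}$ has the left lifting property against these. $U\mathbf{H}\mathbb{A}$ is the category of objects and horizontal morphisms of $\mathbb{A}$, $U\mathbf{V}\mathbb{A}$ the category of objects and vertical morphisms. $\mathbbm{1}$ is the terminal category, $\mathbbm{2}=\{0\to1\}$. *)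

From mathcomp Require Import ssreflect ssrfun ssrbool.
From Stdlib Require Import List.

Set Implicit Arguments.
Unset Strict Implicit.
Unset Printing Implicit Defensive.

(* Strict double categories (internal categories in Cat), presented by their
   four sorts (objects, horizontal morphisms, vertical morphisms, squares)
   with boundary maps.  Composites take a proof that the boundaries match;
   all axioms are quantified over every such proof.                          *)

Record DblCat := {
  Ob : Type;
  Hor : Type;
  hs : Hor -> Ob;  ht : Hor -> Ob;
  hid : Ob -> Hor;
  hcomp : forall f g : Hor, ht f = hs g -> Hor;
  Ver : Type;
  vs : Ver -> Ob;  vt : Ver -> Ob;
  vid : Ob -> Ver;
  vcomp : forall u v : Ver, vt u = vs v -> Ver;
  Sq : Type;
  sl : Sq -> Ver;  sr : Sq -> Ver;  st : Sq -> Hor;  sb : Sq -> Hor;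
  hsq_id : Ver -> Sq;
  vsq_id : Hor -> Sq;
  hsq_comp : forall a b : Sq, sr a = sl b -> Sq;
  vsq_comp : forall a b : Sq, sb a = st b -> Sq;

  sq_tl : forall a, hs (st a) = vs (sl a);
  sq_tr : forall a, ht (st a) = vs (sr a);
  sq_bl : forall a, hs (sb a) = vt (sl a);
  sq_br : forall a, ht (sb a) = vt (sr a);

  hid_s : forall x, hs (hid x) = x;
  hid_t : forall x, ht (hid x) = x;
  hcomp_s : forall f g e, hs (@hcomp f g e) = hs f;
  hcomp_t : forall f g e, ht (@hcomp f g e) = ht g;
  hcomp_id_l : forall f e, @hcomp (hid (hs f)) f e = f;
  hcomp_id_r : forall f e, @hcomp f (hid (ht f)) e = f;
  hcomp_assoc : forall f g h e1 e2 e3 e4,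
      @hcomp (@hcomp f g e1) h e2 = @hcomp f (@hcomp g h e3) e4;

  vid_s : forall x, vs (vid x) = x;
  vid_t : forall x, vt (vid x) = x;
  vcomp_s : forall u v e, vs (@vcomp u v e) = vs u;
  vcomp_t : forall u v e, vt (@vcomp u v e) = vt v;
  vcomp_id_l : forall u e, @vcomp (vid (vs u)) u e = u;
  vcomp_id_r : forall u e, @vcomp u (vid (vt u)) e = u;
  vcomp_assoc : forall u v w e1 e2 e3 e4,
      @vcomp (@vcomp u v e1) w e2 = @vcomp u (@vcomp v w e3) e4;

  hsq_id_l : forall u, sl (hsq_id u) = u;
  hsq_id_r : forall u, sr (hsq_id u) = u;
  hsq_id_t : forall u, st (hsq_id u) = hid (vs u);
  hsq_id_b : forall u, sb (hsq_id u) = hid (vt u);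
  vsq_id_l : forall f, sl (vsq_id f) = vid (hs f);
  vsq_id_r : forall f, sr (vsq_id f) = vid (ht f);
  vsq_id_t : forall f, st (vsq_id f) = f;
  vsq_id_b : forall f, sb (vsq_id f) = f;

  hsq_comp_l : forall a b e, sl (@hsq_comp a b e) = sl a;
  hsq_comp_r : forall a b e, sr (@hsq_comp a b e) = sr b;
  hsq_comp_t : forall a b e e', st (@hsq_comp a b e) = @hcomp (st a) (st b) e';
  hsq_comp_b : forall a b e e', sb (@hsq_comp a b e) = @hcomp (sb a) (sb b) e';
  vsq_comp_t : forall a b e, st (@vsq_comp a b e) = st a;
  vsq_comp_b : forall a b e, sb (@vsq_comp a b e) = sb b;
  vsq_comp_l : forall a b e e', sl (@vsq_comp a b e) = @vcomp (sl a) (sl b) e';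
  vsq_comp_r : forall a b e e', sr (@vsq_comp a b e) = @vcomp (sr a) (sr b) e';

  hsq_comp_id_l : forall a e, @hsq_comp (hsq_id (sl a)) a e = a;
  hsq_comp_id_r : forall a e, @hsq_comp a (hsq_id (sr a)) e = a;
  hsq_comp_assoc : forall a b c e1 e2 e3 e4,
      @hsq_comp (@hsq_comp a b e1) c e2 = @hsq_comp a (@hsq_comp b c e3) e4;
  vsq_comp_id_l : forall a e, @vsq_comp (vsq_id (st a)) a e = a;
  vsq_comp_id_r : forall a e, @vsq_comp a (vsq_id (sb a)) e = a;
  vsq_comp_assoc : forall a b c e1 e2 e3 e4,
      @vsq_comp (@vsq_comp a b e1) c e2 = @vsq_comp a (@vsq_comp b c e3) e4;

  id_id : forall x, hsq_id (vid x) = vsq_id (hid x);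
  hsq_id_vcomp : forall u v e e',
      hsq_id (@vcomp u v e) = @vsq_comp (hsq_id u) (hsq_id v) e';
  vsq_id_hcomp : forall f g e e',
      vsq_id (@hcomp f g e) = @hsq_comp (vsq_id f) (vsq_id g) e';
  interchange : forall a b c d e1 e2 e3 e4 e5 e6,
      @vsq_comp (@hsq_comp a b e1) (@hsq_comp c d e2) e5 =
      @hsq_comp (@vsq_comp a c e3) (@vsq_comp b d e4) e6
}.

Record DblFunctor (A B : DblCat) := {
  fO : Ob A -> Ob B;
  fH : Hor A -> Hor B;
  fV : Ver A -> Ver B;
  fS : Sq A -> Sq B;
  fH_s : forall f, hs (fH f) = fO (hs f);
  fH_t : forall f, ht (fH f) = fO (ht f);
  fV_s : forall u, vs (fV u) = fO (vs u);
  fV_t : forall u, vt (fV u) = fO (vt u);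
  fS_l : forall a, sl (fS a) = fV (sl a);
  fS_r : forall a, sr (fS a) = fV (sr a);
  fS_t : forall a, st (fS a) = fH (st a);
  fS_b : forall a, sb (fS a) = fH (sb a);
  fH_id : forall x, fH (hid x) = hid (fO x);
  fH_comp : forall f g e e', fH (@hcomp A f g e) = @hcomp B (fH f) (fH g) e';
  fV_id : forall x, fV (vid x) = vid (fO x);
  fV_comp : forall u v e e', fV (@vcomp A u v e) = @vcomp B (fV u) (fV v) e';
  fS_hid : forall u, fS (hsq_id u) = hsq_id (fV u);
  fS_vid : forall f, fS (vsq_id f) = vsq_id (fH f);
  fS_hcomp : forall a b e e', fS (@hsq_comp A a b e) = @hsq_comp B (fS a) (fS b) e';
  fS_vcomp : forall a b e e', fS (@vsq_comp A a b e) = @vsq_comp B (fS a) (fS b) e'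
}.

Definition trivial_fibration (X Y : DblCat) (P : DblFunctor X Y) : Prop :=
  (forall y : Ob Y, exists x : Ob X, fO P x = y) /\
  (forall (x x' : Ob X) (g : Hor Y), hs g = fO P x -> ht g = fO P x' ->
     exists f : Hor X, [/\ hs f = x, ht f = x' & fH P f = g]) /\
  (forall v : Ver Y, exists u : Ver X, fV P u = v) /\
  (forall (f f' : Hor X) (u u' : Ver X) (b : Sq Y),
     hs f = vs u -> ht f = vs u' -> hs f' = vt u -> ht f' = vt u' ->
     st b = fH P f -> sb b = fH P f' -> sl b = fV P u -> sr b = fV P u' ->
     exists! a : Sq X, [/\ st a = f, sb a = f', sl a = u, sr a = u' & fS P a = b]).

(* Cofibrant: the unique double functor from the empty double category to A
   has the left lifting property against all trivial fibrations; i.e. every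
   double functor A -> Y lifts along every trivial fibration X -> Y. *)
Definition cofibrant (A : DblCat) : Prop :=
  forall (X Y : DblCat) (P : DblFunctor X Y), trivial_fibration P ->
  forall F : DblFunctor A Y, exists G : DblFunctor A X,
    [/\ forall x, fO P (fO G x) = fO F x,
        forall f, fH P (fH G f) = fH F f,
        forall u, fV P (fV G u) = fV F u &
        forall a, fS P (fS G a) = fS F a].

(* Categories (data suffices to speak of isomorphism of categories).          *)

Record CatData := {
  cOb : Type;
  cMor : Type;
  csrc : cMor -> cOb;  ctgt : cMor -> cOb;
  cid : cOb -> cMor;
  ccomp : forall f g : cMor, ctgt f = csrc g -> cMor
}.

Definition cat_iso (C D : CatData) : Prop :=
  exists (Fo : cOb C -> cOb D) (Fm : cMor C -> cMor D),
    [/\ (forall f, csrc (Fm f) = Fo (csrc f)),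
        (forall f, ctgt (Fm f) = Fo (ctgt f)),
        (forall x, Fm (cid x) = cid (Fo x)),
        (forall f g e e', Fm (@ccomp C f g e) = @ccomp D (Fm f) (Fm g) e') &
        bijective Fo /\ bijective Fm].

Definition UH (A : DblCat) : CatData :=
  {| cOb := Ob A; cMor := Hor A; csrc := @hs A; ctgt := @ht A;
     cid := @hid A; ccomp := @hcomp A |}.
Definition UV (A : DblCat) : CatData :=
  {| cOb := Ob A; cMor := Ver A; csrc := @vs A; ctgt := @vt A;
     cid := @vid A; ccomp := @vcomp A |}.

Record Graph := { gV : Type; gE : Type; gsrc : gE -> gV; gtgt : gE -> gV }.

Fixpoint chain (G : Graph) (v : gV G) (l : list (gE G)) : Prop :=
  match l with
  | nil => True
  | e :: l' => gsrc e = v /\ chain (gtgt e) l'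
  end.

Fixpoint path_end (G : Graph) (v : gV G) (l : list (gE G)) : gV G :=
  match l with
  | nil => v
  | e :: l' => path_end (gtgt e) l'
  end.

Record gpath (G : Graph) := { pstart : gV G; pedges : list (gE G);
                              pchain : chain pstart pedges }.

Lemma chain_app (G : Graph) (v : gV G) (l1 l2 : list (gE G)) :
  chain v l1 -> chain (path_end v l1) l2 -> chain v (l1 ++ l2).
Proof.
elim: l1 v => [|e l1 IH] v //= [-> H1] H2; split=> //; exact: IH.
Qed.

Definition path_comp (G : Graph) (p q : gpath G)
  (e : path_end (pstart p) (pedges p) = pstart q) : gpath G :=
  {| pstart := pstart p; pedges := pedges p ++ pedges q;
     pchain := chain_app (pchain p)
                 (eq_ind_r (fun z => chain z (pedges q)) (pchain q) e) |}.

Definition FreeCat (G : Graph) : CatData :=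
  {| cOb := gV G; cMor := gpath G;
     csrc := fun p => pstart p;
     ctgt := fun p => path_end (pstart p) (pedges p);
     cid := fun v => {| pstart := v; pedges := nil; pchain := I |};
     ccomp := @path_comp G |}.

Definition free_category (C : CatData) : Prop :=
  exists G : Graph, cat_iso (FreeCat G) C.

(* Disjoint union of copies of 1 and 2: component i is 2 = {0 -> 1} when
   k i = true and 1 when k i = false.  Objects are pairs (i, b) with b = false
   (the object 0, or the unique object of 1) or b = true (the object 1 of 2);
   there is exactly one morphism (i,b) -> (i',b') iff i = i' and b <= b'. *)
Definition sum12_Ob (I : Type) (k : I -> bool) : Type :=
  {p : I * bool | k p.1 || ~~ p.2}.

Definition sum12_Mor (I : Type) (k : I -> bool) : Type :=
  {ab : sum12_Ob k * sum12_Ob k |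
     (proj1_sig ab.1).1 = (proj1_sig ab.2).1 /\
     ((proj1_sig ab.1).2 ==> (proj1_sig ab.2).2) }.

Definition sum12_id (I : Type) (k : I -> bool) (x : sum12_Ob k) : sum12_Mor k :=
  exist _ (x, x) (conj erefl (implybb _)).

Lemma sum12_comp_ok (I : Type) (k : I -> bool) (f g : sum12_Mor k) :
  (proj1_sig f).2 = (proj1_sig g).1 ->
  (proj1_sig (proj1_sig f).1).1 = (proj1_sig (proj1_sig g).2).1 /\
  ((proj1_sig (proj1_sig f).1).2 ==> (proj1_sig (proj1_sig g).2).2).
Proof.
case: f => [[a b] /= [Hf1 Hf2]]; case: g => [[b' c] /= [Hg1 Hg2]] E.
subst b'; split; first by rewrite Hf1.
by move: Hf2 Hg2; case: (proj1_sig a).2; case: (proj1_sig b).2.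
Qed.

Definition sum12_comp (I : Type) (k : I -> bool) (f g : sum12_Mor k)
  (e : (proj1_sig f).2 = (proj1_sig g).1) : sum12_Mor k :=
  exist _ ((proj1_sig f).1, (proj1_sig g).2) (sum12_comp_ok e).

Definition Sum12 (I : Type) (k : I -> bool) : CatData :=
  {| cOb := sum12_Ob k; cMor := sum12_Mor k;
     csrc := fun f => (proj1_sig f).1; ctgt := fun f => (proj1_sig f).2;
     cid := @sum12_id I k; ccomp := @sum12_comp I k |}.

Definition disjoint_union_of_1_and_2 (C : CatData) : Prop :=
  exists (I : Type) (k : I -> bool), cat_iso (Sum12 k) C.

From Pilot Require Import Defs.
From mathcomp Require Import ssreflect ssrfun ssrbool.
From Stdlib Require Import List ProofIrrelevance ClassicalEpsilon Classical Lia.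
Set Implicit Arguments. Unset Strict Implicit. Unset Printing Implicit Defensive.

(* A is cofibrant iff U H A is free on a graph and U V A is a disjoint union of
   copies of 1 and 2.  The second condition is equivalent to the statement that
   the non-identity vertical morphisms of A are "isolated": no two of them are
   composable, and distinct ones have distinct sources and distinct targets
   ([isolated_vertical]).

   (=>) We build a "resolution" R(A) with a trivial fibration R(A) -> A.  A
   horizontal morphism of R(A) is a word of composable horizontal morphisms of
   A, and every vertical morphism u of A gets a copy in R(A) with fresh
   endpoints (u,0), (u,1).  Lifting the identity of A along this fibration
   assigns to each horizontal morphism a word, compatibly with composition;
   this yields a length function with unique factorisations, which forces
   U H A to be free on its indecomposable morphisms ([free_of_length]).  The
   lift on vertical morphisms forces the non-identity ones to be isolated.

   (<=) Given the two conditions, a lift of F : A -> Y along a trivial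
   fibration P : X -> Y is built by hand: objects are lifted through the
   chosen lifts of the (isolated) non-identity vertical morphisms, horizontal
   morphisms freely from lifts of the generating edges, and squares by the
   full faithfulness of P on squares. *)

Definition choose T (Q : T -> Prop) (H : exists x, Q x) : T :=
  proj1_sig (constructive_indefinite_description _ H).

Lemma chooseP T (Q : T -> Prop) (H : exists x, Q x) : Q (choose H).
Proof. by rewrite /choose; case: constructive_indefinite_description. Qed.

Lemma sig_eq T (P : T -> Prop) (a b : sig P) : proj1_sig a = proj1_sig b -> a = b.
Proof.
by case: a b => [x px] [y py] /= E; subst y; rewrite (proof_irrelevance _ px py).
Qed.

Lemma inj_surj_bij (T U : Type) (f : T -> U) :
  injective f -> (forall y, exists x, f x = y) -> bijective f.
Proof.
move=> f_inj f_surj; exists (fun y => choose (f_surj y)) => [x|y].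
- by apply: f_inj; apply: (chooseP (f_surj (f x))).
- exact: (chooseP (f_surj y)).
Qed.

Lemma bijective_inverse T U (f : T -> U) :
  bijective f -> exists g, cancel f g /\ cancel g f.
Proof. by case=> g fK gK; exists g. Qed.

Definition bij_inv T U (f : T -> U) (fb : bijective f) : U -> T :=
  choose (bijective_inverse fb).

Lemma bij_invK T U (f : T -> U) (fb : bijective f) :
  cancel f (bij_inv fb) /\ cancel (bij_inv fb) f.
Proof. exact: (chooseP (bijective_inverse fb)). Qed.

(* Extending a function defined on proofs of [P] by a default value: this lets
   us compose morphisms without carrying proofs that the boundaries match. *)
Definition totalize T (P : Prop) (f : P -> T) (d : T) : T :=
  if excluded_middle_informative P is left e then f e else d.

Lemma totalizeE T (P : Prop) (f : P -> T) d (e : P) : totalize f d = f e.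
Proof.
rewrite /totalize; case: excluded_middle_informative => // e'.
by rewrite (proof_irrelevance _ e e').
Qed.

Section TotalComposition.
Variable A : DblCat.

Definition hcat (f g : Hor A) := totalize (@hcomp A f g) f.
Definition vcat (u v : Ver A) := totalize (@vcomp A u v) u.
Definition sq_hcat (a b : Sq A) := totalize (@hsq_comp A a b) a.
Definition sq_vcat (a b : Sq A) := totalize (@vsq_comp A a b) a.

Lemma hcatE f g e : @hcomp A f g e = hcat f g. Proof. by rewrite /hcat totalizeE. Qed.
Lemma vcatE u v e : @vcomp A u v e = vcat u v. Proof. by rewrite /vcat totalizeE. Qed.
Lemma sq_hcatE a b e : @hsq_comp A a b e = sq_hcat a b.
Proof. by rewrite /sq_hcat totalizeE. Qed.
Lemma sq_vcatE a b e : @vsq_comp A a b e = sq_vcat a b.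
Proof. by rewrite /sq_vcat totalizeE. Qed.

Lemma hcat_s f g : ht f = hs g -> hs (hcat f g) = hs f.
Proof. by move=> e; rewrite -(hcatE e) hcomp_s. Qed.
Lemma hcat_t f g : ht f = hs g -> ht (hcat f g) = ht g.
Proof. by move=> e; rewrite -(hcatE e) hcomp_t. Qed.
Lemma hcat_idl f : hcat (hid (hs f)) f = f.
Proof. by rewrite -(@hcatE _ _ (hid_t _)) hcomp_id_l. Qed.
Lemma hcat_idr f : hcat f (hid (ht f)) = f.
Proof. by rewrite -(@hcatE _ _ (esym (hid_s _))) hcomp_id_r. Qed.
Lemma hcat_assoc f g h : ht f = hs g -> ht g = hs h ->
  hcat (hcat f g) h = hcat f (hcat g h).
Proof.
move=> e1 e3; have e2 : ht (hcomp e1) = hs h by rewrite hcomp_t.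
have e4 : ht f = hs (hcomp e3) by rewrite hcomp_s.
by have := @hcomp_assoc A f g h e1 e2 e3 e4; rewrite !hcatE.
Qed.

Lemma vcat_idl u x : vs u = x -> vcat (vid x) u = u.
Proof. by move=> <-; rewrite -(@vcatE _ _ (vid_t _)) vcomp_id_l. Qed.
Lemma vcat_idr u x : vt u = x -> vcat u (vid x) = u.
Proof. by move=> <-; rewrite -(@vcatE _ _ (esym (vid_s _))) vcomp_id_r. Qed.

Implicit Types a b c d : Sq A.

Lemma sq_hcat_l a b : sr a = sl b -> sl (sq_hcat a b) = sl a.
Proof. by move=> e; rewrite -(sq_hcatE e) hsq_comp_l. Qed.
Lemma sq_hcat_r a b : sr a = sl b -> sr (sq_hcat a b) = sr b.
Proof. by move=> e; rewrite -(sq_hcatE e) hsq_comp_r. Qed.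
Lemma sq_hcat_t a b : sr a = sl b -> st (sq_hcat a b) = hcat (st a) (st b).
Proof.
move=> e; have e' : ht (st a) = hs (st b) by rewrite sq_tr e -sq_tl.
by rewrite -(sq_hcatE e) (hsq_comp_t e e') hcatE.
Qed.
Lemma sq_hcat_b a b : sr a = sl b -> sb (sq_hcat a b) = hcat (sb a) (sb b).
Proof.
move=> e; have e' : ht (sb a) = hs (sb b) by rewrite sq_br e -sq_bl.
by rewrite -(sq_hcatE e) (hsq_comp_b e e') hcatE.
Qed.
Lemma sq_vcat_t a b : sb a = st b -> st (sq_vcat a b) = st a.
Proof. by move=> e; rewrite -(sq_vcatE e) vsq_comp_t. Qed.
Lemma sq_vcat_b a b : sb a = st b -> sb (sq_vcat a b) = sb b.
Proof. by move=> e; rewrite -(sq_vcatE e) vsq_comp_b. Qed.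
Lemma sq_vcat_l a b : sb a = st b -> sl (sq_vcat a b) = vcat (sl a) (sl b).
Proof.
move=> e; have e' : vt (sl a) = vs (sl b) by rewrite -sq_bl e sq_tl.
by rewrite -(sq_vcatE e) (vsq_comp_l e e') vcatE.
Qed.
Lemma sq_vcat_r a b : sb a = st b -> sr (sq_vcat a b) = vcat (sr a) (sr b).
Proof.
move=> e; have e' : vt (sr a) = vs (sr b) by rewrite -sq_br e sq_tr.
by rewrite -(sq_vcatE e) (vsq_comp_r e e') vcatE.
Qed.

Lemma sq_hcat_idl a : sq_hcat (hsq_id (sl a)) a = a.
Proof. by rewrite -(@sq_hcatE _ _ (hsq_id_r _)) hsq_comp_id_l. Qed.
Lemma sq_hcat_idr a : sq_hcat a (hsq_id (sr a)) = a.
Proof. by rewrite -(@sq_hcatE _ _ (esym (hsq_id_l _))) hsq_comp_id_r. Qed.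
Lemma sq_vcat_idl a : sq_vcat (vsq_id (st a)) a = a.
Proof. by rewrite -(@sq_vcatE _ _ (vsq_id_b _)) vsq_comp_id_l. Qed.
Lemma sq_vcat_idr a : sq_vcat a (vsq_id (sb a)) = a.
Proof. by rewrite -(@sq_vcatE _ _ (esym (vsq_id_t _))) vsq_comp_id_r. Qed.
Lemma sq_hcat_assoc a b c : sr a = sl b -> sr b = sl c ->
  sq_hcat (sq_hcat a b) c = sq_hcat a (sq_hcat b c).
Proof.
move=> e1 e3; have e2 : sr (hsq_comp e1) = sl c by rewrite hsq_comp_r.
have e4 : sr a = sl (hsq_comp e3) by rewrite hsq_comp_l.
by have := @hsq_comp_assoc A a b c e1 e2 e3 e4; rewrite !sq_hcatE.
Qed.
Lemma sq_vcat_assoc a b c : sb a = st b -> sb b = st c ->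
  sq_vcat (sq_vcat a b) c = sq_vcat a (sq_vcat b c).
Proof.
move=> e1 e3; have e2 : sb (vsq_comp e1) = st c by rewrite vsq_comp_b.
have e4 : sb a = st (vsq_comp e3) by rewrite vsq_comp_t.
by have := @vsq_comp_assoc A a b c e1 e2 e3 e4; rewrite !sq_vcatE.
Qed.

Lemma hsq_id_vcat (u v : Ver A) : vt u = vs v ->
  hsq_id (vcat u v) = sq_vcat (hsq_id u) (hsq_id v).
Proof.
move=> e; have e' : sb (hsq_id u) = st (hsq_id v) by rewrite hsq_id_b hsq_id_t e.
by rewrite -(vcatE e) (hsq_id_vcomp e e') sq_vcatE.
Qed.
Lemma vsq_id_hcat (f g : Hor A) : ht f = hs g ->
  vsq_id (hcat f g) = sq_hcat (vsq_id f) (vsq_id g).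
Proof.
move=> e; have e' : sr (vsq_id f) = sl (vsq_id g) by rewrite vsq_id_r vsq_id_l e.
by rewrite -(hcatE e) (vsq_id_hcomp e e') sq_hcatE.
Qed.
Lemma sq_interchange a b c d : sr a = sl b -> sr c = sl d -> sb a = st c -> sb b = st d ->
  sq_vcat (sq_hcat a b) (sq_hcat c d) = sq_hcat (sq_vcat a c) (sq_vcat b d).
Proof.
move=> e1 e2 e3 e4.
have e5 : sb (hsq_comp e1) = st (hsq_comp e2).
  by rewrite (sq_hcatE e1) (sq_hcatE e2) sq_hcat_b // sq_hcat_t // e3 e4.
have e6 : sr (vsq_comp e3) = sl (vsq_comp e4).
  by rewrite (sq_vcatE e3) (sq_vcatE e4) sq_vcat_r // sq_vcat_l // e1 e2.
have := @Defs.interchange A a b c d e1 e2 e3 e4 e5 e6.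
by rewrite (sq_vcatE e5) (sq_hcatE e6) !sq_hcatE !sq_vcatE.
Qed.
End TotalComposition.

Section FunctorTotal.
Variables (A B : DblCat) (F : DblFunctor A B).

Lemma fH_hcat (f g : Hor A) : ht f = hs g -> fH F (hcat f g) = hcat (fH F f) (fH F g).
Proof.
move=> e; have e' : ht (fH F f) = hs (fH F g) by rewrite fH_s fH_t e.
by rewrite -(hcatE e) (@fH_comp _ _ F _ _ e e') hcatE.
Qed.
Lemma fS_sq_hcat (a b : Sq A) : sr a = sl b ->
  fS F (sq_hcat a b) = sq_hcat (fS F a) (fS F b).
Proof.
move=> e; have e' : sr (fS F a) = sl (fS F b) by rewrite fS_l fS_r e.
by rewrite -(sq_hcatE e) (@fS_hcomp _ _ F _ _ e e') sq_hcatE.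
Qed.
Lemma fS_sq_vcat (a b : Sq A) : sb a = st b ->
  fS F (sq_vcat a b) = sq_vcat (fS F a) (fS F b).
Proof.
move=> e; have e' : sb (fS F a) = st (fS F b) by rewrite fS_t fS_b e.
by rewrite -(sq_vcatE e) (@fS_vcomp _ _ F _ _ e e') sq_vcatE.
Qed.
End FunctorTotal.

Section Words.
Variable A : DblCat.

Fixpoint hwalk (a : Ob A) (l : list (Hor A)) (b : Ob A) : Prop :=
  match l with nil => a = b | g :: l' => hs g = a /\ hwalk (ht g) l' b end.

Fixpoint hcat_word (a : Ob A) (l : list (Hor A)) : Hor A :=
  match l with nil => hid a | g :: l' => hcat g (hcat_word (ht g) l') end.

Lemma hwalk_app a l1 b l2 c : hwalk a l1 b -> hwalk b l2 c -> hwalk a (l1 ++ l2) c.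
Proof.
elim: l1 a => [|g l1 IH] a /=; first by move=> ->.
by case=> -> W1 W2; split=> //; exact: IH W1 W2.
Qed.

Lemma hwalk_split a l1 l2 c : hwalk a (l1 ++ l2) c -> exists b, hwalk a l1 b /\ hwalk b l2 c.
Proof.
elim: l1 a => [|g l IH] a /=; first by move=> W; exists a.
by case=> E /IH [b [W1 W2]]; exists b.
Qed.

Lemma hwalk_det a l b b' : hwalk a l b -> hwalk a l b' -> b = b'.
Proof.
elim: l a => [|g l IH] a /=; first by move=> <- <-.
by case=> _ W [_ W']; exact: IH W W'.
Qed.

Lemma hcat_word_s a l b : hwalk a l b -> hs (hcat_word a l) = a.
Proof.
elim: l a => [|g l IH] a /=; first by rewrite hid_s.
by case=> E W; rewrite hcat_s ?(IH _ W).
Qed.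

Lemma hcat_word_t a l b : hwalk a l b -> ht (hcat_word a l) = b.
Proof.
elim: l a => [|g l IH] a /=; first by rewrite hid_t.
by case=> E W; rewrite hcat_t ?(IH _ W) ?(hcat_word_s W).
Qed.

Lemma hcat_word_app a l1 b l2 c : hwalk a l1 b -> hwalk b l2 c ->
  hcat_word a (l1 ++ l2) = hcat (hcat_word a l1) (hcat_word b l2).
Proof.
elim: l1 a => [|g l1 IH] a /=; first by move=> -> W2; rewrite -{2}(hcat_word_s W2) hcat_idl.
case=> E W1 W2; rewrite (IH _ W1 W2) hcat_assoc //; first by rewrite (hcat_word_s W1).
by rewrite (hcat_word_t W1) (hcat_word_s W2).
Qed.

Lemma chain_hwalk (G : Graph) (vo : gV G -> Ob A) (eh : gE G -> Hor A) :
  (forall e, hs (eh e) = vo (gsrc e)) -> (forall e, ht (eh e) = vo (gtgt e)) ->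
  forall v l, chain v l -> hwalk (vo v) (map eh l) (vo (path_end v l)).
Proof.
move=> eh_s eh_t v l; elim: l v => [|e l IH] v //= [<- C].
by rewrite eh_s eh_t; split=> //; exact: IH.
Qed.
End Words.

Lemma gpath_eq (G : Graph) (p q : gpath G) :
  pstart p = pstart q -> pedges p = pedges q -> p = q.
Proof.
by case: p q => [s l c] [s' l' c'] /= E1 E2; subst; rewrite (proof_irrelevance _ c c').
Qed.

(* The vertical
   category is a disjoint union of copies of 1 and 2 exactly when the
   non-trivial vertical morphisms are isolated in the following sense. *)
Definition nonid (A : DblCat) (u : Ver A) : Prop := u <> vid (vs u).

Record isolated_vertical (A : DblCat) : Prop := {
  nonid_not_composable : forall u v : Ver A, nonid u -> nonid v -> vt u <> vs v;
  nonid_src_inj : forall u v : Ver A, nonid u -> nonid v -> vs u = vs v -> u = v;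
  nonid_tgt_inj : forall u v : Ver A, nonid u -> nonid v -> vt u = vt v -> u = v }.

Lemma not_nonid (A : DblCat) (u : Ver A) : ~ nonid u -> u = vid (vs u).
Proof. exact: NNPP. Qed.

Lemma not_nonid_t (A : DblCat) (u : Ver A) : ~ nonid u -> vt u = vs u.
Proof. by move/not_nonid=> {1}->; rewrite vid_t. Qed.

Definition asbool (P : Prop) : bool := if excluded_middle_informative P then true else false.

Lemma asboolT (P : Prop) : asbool P = true -> P.
Proof. by rewrite /asbool; case: excluded_middle_informative. Qed.

Lemma asboolI (P : Prop) : P -> asbool P = true.
Proof. by rewrite /asbool; case: excluded_middle_informative. Qed.

(* Isolated non-trivial vertical morphisms make U V A a sum of 1's and 2's:
   the components are indexed by the objects that are not the target of a
   non-trivial morphism, and a component is 2 when its object is the source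
   of one (which is then unique). *)
Section SumOfIntervals.
Variable A : DblCat.
Hypothesis isoA : isolated_vertical A.

Definition has_out (x : Ob A) := exists u : Ver A, nonid u /\ vs u = x.
Definition has_in (x : Ob A) := exists u : Ver A, nonid u /\ vt u = x.

Definition out_ver (x : Ob A) : Ver A :=
  if excluded_middle_informative (has_out x) is left H then choose H else vid x.

Lemma out_ver_spec x : has_out x -> nonid (out_ver x) /\ vs (out_ver x) = x.
Proof. by rewrite /out_ver; case: excluded_middle_informative => // H _; exact: (chooseP H). Qed.

Lemma out_ver_eq u : nonid u -> out_ver (vs u) = u.
Proof.
move=> N; have [N' E] := out_ver_spec (ex_intro _ u (conj N erefl)).
exact: nonid_src_inj isoA _ _ N' N E.
Qed.

Definition component := {x : Ob A | ~ has_in x}.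
Definition comp_kind (i : component) : bool := asbool (has_out (proj1_sig i)).

Lemma src_component u : nonid u -> ~ has_in (vs u).
Proof. by move=> N [w [Nw Ew]]; exact: nonid_not_composable isoA _ _ Nw N Ew. Qed.

Definition ob_of_pair (p : component * bool) : Ob A :=
  if p.2 then vt (out_ver (proj1_sig p.1)) else proj1_sig p.1.
Definition sum_ob (o : sum12_Ob comp_kind) : Ob A := ob_of_pair (proj1_sig o).

Definition msrc (m : sum12_Mor comp_kind) := proj1_sig (proj1_sig m).1.
Definition mtgt (m : sum12_Mor comp_kind) := proj1_sig (proj1_sig m).2.

Definition sum_mor (m : sum12_Mor comp_kind) : Ver A :=
  if ~~ (msrc m).2 && (mtgt m).2 then out_ver (proj1_sig (msrc m).1)
  else vid (ob_of_pair (msrc m)).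

Lemma sum_mor_shape m : (msrc m).1 = (mtgt m).1 /\ ((msrc m).2 ==> (mtgt m).2).
Proof. by case: m => [[o1 o2] pr]. Qed.

Lemma sum_ob_ok (o : sum12_Ob comp_kind) : comp_kind (proj1_sig o).1 || ~~ (proj1_sig o).2.
Proof. by case: o. Qed.

Lemma sum_mor_s m : vs (sum_mor m) = sum_ob (proj1_sig m).1.
Proof.
rewrite /sum_mor /sum_ob -/(msrc m).
case: (sum_mor_shape m) (sum_ob_ok (proj1_sig m).2); rewrite -/(mtgt m).
case: (msrc m) => [i1 b1]; case: (mtgt m) => [i2 b2] /= E Imp ok; subst i2.
case: b1 b2 Imp ok => [] [] //= _; rewrite ?vid_s // orbF => /asboolT H.
by have [_ ->] := out_ver_spec H.
Qed.

Lemma sum_mor_t m : vt (sum_mor m) = sum_ob (proj1_sig m).2.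
Proof.
rewrite /sum_mor /sum_ob -/(msrc m) -/(mtgt m).
case: (sum_mor_shape m); case: (msrc m) => [i1 b1]; case: (mtgt m) => [i2 b2] /= E Imp.
by subst i2; case: b1 b2 Imp => [] [] //= _; rewrite ?vid_t.
Qed.

Lemma sum_ob_inj : injective sum_ob.
Proof.
case=> [[i b] ok] [[i' b'] ok']; rewrite /sum_ob /ob_of_pair /= => E; apply: sig_eq => /=.
case: b b' ok ok' E => [] [] /=; rewrite ?orbF ?orbT => ok ok' E.
- have [N1 S1] := out_ver_spec (asboolT ok); have [N2 S2] := out_ver_spec (asboolT ok').
  have Eu := nonid_tgt_inj isoA N1 N2 E.
  by have /sig_eq -> : proj1_sig i = proj1_sig i' by rewrite -S1 Eu S2.
- have [N1 _] := out_ver_spec (asboolT ok).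
  by case: (proj2_sig i'); exists (out_ver (proj1_sig i)).
- have [N2 _] := out_ver_spec (asboolT ok').
  by case: (proj2_sig i); exists (out_ver (proj1_sig i')).
- by move/sig_eq: E => ->.
Qed.

(* The source of a non-trivial [u] indexes a component of kind 2, whose two
   objects lie over the endpoints of [u]. *)
Definition src_pt (u : Ver A) (N : nonid u) : component := exist _ (vs u) (src_component N).

Lemma src_pt_ok u (N : nonid u) : comp_kind (src_pt N) || ~~ true.
Proof. by rewrite /comp_kind asboolI //; exists u. Qed.

Lemma sum_ob_surj x : exists o : sum12_Ob comp_kind, sum_ob o = x.
Proof.
case: (classic (has_in x)) => [[v [N <-]]|N].
- by exists (exist _ (src_pt N, true) (src_pt_ok N)); rewrite /sum_ob /ob_of_pair /= out_ver_eq.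
- have ok : comp_kind (exist _ x N) || ~~ false by rewrite orbT.
  by exists (exist _ (exist _ x N, false) ok).
Qed.

Lemma sum_mor_inj : injective sum_mor.
Proof.
move=> m m' E.
have E1 : (proj1_sig m).1 = (proj1_sig m').1 by apply: sum_ob_inj; rewrite -!sum_mor_s E.
have E2 : (proj1_sig m).2 = (proj1_sig m').2 by apply: sum_ob_inj; rewrite -!sum_mor_t E.
by apply: sig_eq; move: E1 E2; case: (proj1_sig m) => ? ?; case: (proj1_sig m') => ? ? /= -> ->.
Qed.

Lemma sum_mor_id o : sum_mor (sum12_id o) = vid (sum_ob o).
Proof. by rewrite /sum_mor /msrc /mtgt /=; case: (proj1_sig o).2; rewrite ?andbN. Qed.

Lemma sum_mor_surj u : exists m, sum_mor m = u.
Proof.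
case: (classic (nonid u)) => N; last first.
  by have [o Eo] := sum_ob_surj (vs u); exists (sum12_id o); rewrite sum_mor_id Eo -not_nonid.
have ok0 : comp_kind (src_pt N) || ~~ false by rewrite orbT.
pose o0 : sum12_Ob comp_kind := exist _ (src_pt N, false) ok0.
pose o1 : sum12_Ob comp_kind := exist _ (src_pt N, true) (src_pt_ok N).
have pr : (proj1_sig o0).1 = (proj1_sig o1).1 /\ ((proj1_sig o0).2 ==> (proj1_sig o1).2) by [].
by exists (exist _ (o0, o1) pr); rewrite /sum_mor /msrc /mtgt /= out_ver_eq.
Qed.

Lemma sum_mor_comp (f g : sum12_Mor comp_kind) (e : (proj1_sig f).2 = (proj1_sig g).1) e' :
  sum_mor (sum12_comp e) = @vcomp A (sum_mor f) (sum_mor g) e'.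
Proof.
rewrite vcatE.
have Ftf := sum_mor_t f; have Fsg := sum_mor_s g.
rewrite /sum_ob -/(mtgt f) in Ftf; rewrite /sum_ob -/(msrc g) in Fsg.
have Em : mtgt f = msrc g by rewrite /mtgt /msrc e.
have Ss : msrc (sum12_comp e) = msrc f by [].
have St : mtgt (sum12_comp e) = mtgt g by [].
move: Ftf Fsg; rewrite /sum_mor Ss St.
case: (sum_mor_shape f) (sum_mor_shape g); rewrite -Em.
case: (msrc f) => [i1 b1]; case: (mtgt f) => [i2 b2]; case: (mtgt g) => [i3 b3] /=.
move=> E1 I1 [E2 I2]; subst i2 i3.
case: b1 b2 b3 I1 I2 => [] [] [] //= _ _ Ftf Fsg.
- by rewrite vcat_idr // vid_t.
- by rewrite vcat_idr.
- by rewrite vcat_idl.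
- by rewrite vcat_idr // vid_t.
Qed.

Lemma isolated_sum12 : disjoint_union_of_1_and_2 (UV A).
Proof.
exists component, comp_kind, sum_ob, sum_mor; split.
- exact: sum_mor_s.
- exact: sum_mor_t.
- exact: sum_mor_id.
- exact: sum_mor_comp.
- split; apply: inj_surj_bij; [exact: sum_ob_inj|exact: sum_ob_surj|
                                exact: sum_mor_inj|exact: sum_mor_surj].
Qed.
End SumOfIntervals.

(* Conversely, in a sum of 1's and 2's the only non-identity morphisms are the
   arrows [(i,0) -> (i,1)], which are isolated. *)
Section IsolatedOfSum.
Variables (A : DblCat) (I : Type) (k : I -> bool).
Variables (Vo : sum12_Ob k -> Ob A) (Vm : sum12_Mor k -> Ver A).
Hypothesis Vm_s : forall m, vs (Vm m) = Vo (proj1_sig m).1.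
Hypothesis Vm_t : forall m, vt (Vm m) = Vo (proj1_sig m).2.
Hypothesis Vm_id : forall o, Vm (sum12_id o) = vid (Vo o).
Hypothesis Vo_inj : injective Vo.
Hypothesis Vm_surj : forall u, exists m, Vm m = u.

Lemma sum12_mor_shape (m : sum12_Mor k) : (proj1_sig m).1 = (proj1_sig m).2 \/
  ((proj1_sig (proj1_sig m).1).2 = false /\ (proj1_sig (proj1_sig m).2).2 = true).
Proof.
case: m => [[[[i1 b1] ok1] [[i2 b2] ok2]] [/= E Imp]]; subst i2.
by case: b1 b2 ok1 ok2 Imp => [] [] //= ok1 ok2 _; [left|right|left]; try apply: sig_eq.
Qed.

Lemma sum12_mor_component (m : sum12_Mor k) :
  (proj1_sig (proj1_sig m).1).1 = (proj1_sig (proj1_sig m).2).1.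
Proof. by case: m => [[o1 o2] [E Imp]]. Qed.

Lemma nonid_interval u : nonid u -> exists m, Vm m = u /\
  (proj1_sig (proj1_sig m).1).2 = false /\ (proj1_sig (proj1_sig m).2).2 = true.
Proof.
move=> N; have [m Em] := Vm_surj u; exists m; split=> //.
case: (sum12_mor_shape m) => // E; case: N; rewrite -Em.
have -> : m = sum12_id (proj1_sig m).1.
  by apply: sig_eq; move: E; case: (proj1_sig m) => o1 o2 /= ->.
by rewrite Vm_id vid_s.
Qed.

Lemma interval_arrow_eq (m n : sum12_Mor k) :
  (proj1_sig (proj1_sig m).1).2 = false -> (proj1_sig (proj1_sig m).2).2 = true ->
  (proj1_sig (proj1_sig n).1).2 = false -> (proj1_sig (proj1_sig n).2).2 = true ->
  (proj1_sig m).1 = (proj1_sig n).1 \/ (proj1_sig m).2 = (proj1_sig n).2 -> m = n.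
Proof.
move: (sum12_mor_component m) (sum12_mor_component n).
case: m => [[[[i1 b1] ?] [[i2 b2] ?]] ?]; case: n => [[[[j1 c1] ?] [[j2 c2] ?]] ?] /=.
move=> Ei Ej Eb1 Eb2 Ec1 Ec2; subst i2 j2 b1 b2 c1 c2.
by case=> /(f_equal (@proj1_sig _ _)) /= [E]; subst j1;
  apply: sig_eq => /=; congr pair; apply: sig_eq.
Qed.

Lemma sum12_isolated : isolated_vertical A.
Proof.
split=> u v Nu Nv E;
  have [m [Em [Sm Tm]]] := nonid_interval Nu; have [n [En [Sn Tn]]] := nonid_interval Nv;
  move: E; rewrite -Em -En.
- by rewrite Vm_t Vm_s => /Vo_inj E; rewrite E Sn in Tm.
- by rewrite !Vm_s => /Vo_inj E; rewrite (interval_arrow_eq Sm Tm Sn Tn) //; left.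
- by rewrite !Vm_t => /Vo_inj E; rewrite (interval_arrow_eq Sm Tm Sn Tn) //; right.
Qed.
End IsolatedOfSum.

Lemma sum12_iff_isolated (A : DblCat) :
  disjoint_union_of_1_and_2 (UV A) <-> isolated_vertical A.
Proof.
split; last exact: isolated_sum12.
case=> I [k [Vo [Vm [Vm_s Vm_t Vm_id _ [Vo_bij [g _ gK]]]]]].
apply: (sum12_isolated Vm_s Vm_t Vm_id (bij_inj Vo_bij)) => u; by exists (g u).
Qed.

Section FreenessCriterion.
Variables (A : DblCat) (len : Hor A -> nat).
Hypothesis len0 : forall h, len h = 0 -> h = hid (hs h).
Hypothesis lenD : forall f g, ht f = hs g -> len (hcat f g) = len f + len g.
Hypothesis factor_cmp : forall f g f' g' : Hor A,
  ht f = hs g -> ht f' = hs g' -> hcat f g = hcat f' g' ->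
  (exists c, hs c = ht f' /\ f = hcat f' c) \/ (exists c, hs c = ht f /\ f' = hcat f c).
Hypothesis hcat_cancel : forall f g g' : Hor A,
  ht f = hs g -> ht f = hs g' -> hcat f g = hcat f g' -> g = g'.

Definition atom (h : Hor A) : Prop := 0 < len h /\
  forall f g, ht f = hs g -> hcat f g = h -> len f = 0 \/ len g = 0.

Definition atom_graph : Graph :=
  {| gV := Ob A; gE := {h | atom h};
     gsrc := fun e => hs (proj1_sig e); gtgt := fun e => ht (proj1_sig e) |}.

Definition path_hor (v : Ob A) (l : list {h | atom h}) : Hor A :=
  hcat_word v (map (@proj1_sig _ _) l).

Lemma path_hwalk v l : @chain atom_graph v l ->
  hwalk v (map (@proj1_sig _ _) l) (@path_end atom_graph v l).
Proof. exact: (@chain_hwalk A atom_graph id). Qed.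

Lemma path_hor_s v l : @chain atom_graph v l -> hs (path_hor v l) = v.
Proof. by move/path_hwalk/hcat_word_s. Qed.

Lemma path_hor_t v l : @chain atom_graph v l -> ht (path_hor v l) = @path_end atom_graph v l.
Proof. by move/path_hwalk/hcat_word_t. Qed.

Lemma path_hor_app v l1 l2 : @chain atom_graph v l1 ->
  @chain atom_graph (@path_end atom_graph v l1) l2 ->
  path_hor v (l1 ++ l2) = hcat (path_hor v l1) (path_hor (@path_end atom_graph v l1) l2).
Proof.
by move=> /path_hwalk C1 /path_hwalk C2; rewrite /path_hor map_app (hcat_word_app C1 C2).
Qed.

Lemma len_hid v : len (hid v) = 0.
Proof.
have := lenD (f := hid v) (g := hid v); rewrite hid_t hid_s => /(_ erefl).
by have := hcat_idl (hid v); rewrite hid_s => ->; lia.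
Qed.

Lemma path_hor_nil v l : @chain atom_graph v l -> len (path_hor v l) = 0 -> l = nil.
Proof.
case: l => [|e l] //= [_ C]; rewrite lenD; last by rewrite (path_hor_s C).
by have := proj1 (proj2_sig e); lia.
Qed.

Lemma atom_prefix_eq (e e' : {h | atom h}) c : hs c = ht (proj1_sig e') ->
  proj1_sig e = hcat (proj1_sig e') c -> e = e'.
Proof.
move=> Hc E; case: (proj2 (proj2_sig e) _ c (esym Hc) (esym E)).
  by have := proj1 (proj2_sig e'); lia.
by move/len0=> Ec; apply: sig_eq; rewrite E Ec Hc hcat_idr.
Qed.

Lemma path_hor_inj v l l' : @chain atom_graph v l -> @chain atom_graph v l' ->
  path_hor v l = path_hor v l' -> l = l'.
Proof.
elim: l v l' => [|e l IH] v [|e' l'] C C' //= E.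
- by symmetry; apply: (path_hor_nil C'); rewrite -E len_hid.
- by apply: (path_hor_nil C); rewrite E len_hid.
case: C C' E => _ C [_ C'] E.
have h1 : ht (proj1_sig e) = hs (path_hor (ht (proj1_sig e)) l) by rewrite (path_hor_s C).
have h2 : ht (proj1_sig e') = hs (path_hor (ht (proj1_sig e')) l') by rewrite (path_hor_s C').
have ee : e = e'.
  case: (factor_cmp h1 h2 E) => [[c [Hc Ec]]|[c [Hc Ec]]]; first exact: atom_prefix_eq Hc Ec.
  by symmetry; exact: atom_prefix_eq Hc Ec.
by subst e'; congr cons; apply: (IH _ _ C C'); exact: hcat_cancel h1 h2 E.
Qed.

Lemma atom_factorisation n h : len h <= n ->
  exists l, @chain atom_graph (hs h) l /\ path_hor (hs h) l = h.
Proof.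
elim: n h => [|n IH] h Hn; first by exists nil; split=> //=; symmetry; apply: len0; lia.
case: (classic (len h = 0)) => [/len0 E|H0]; first by exists nil; split=> //=; rewrite -E.
case: (classic (atom h)) => Ha.
  by exists (exist _ h Ha :: nil); split=> //; rewrite /path_hor /= hcat_idr.
have [f [g [Efg [Eh [Hf Hg]]]]] :
    exists f g, ht f = hs g /\ hcat f g = h /\ 0 < len f /\ 0 < len g.
  apply: NNPP => N; apply: Ha; split; first lia.
  move=> f g e1 e2; apply: NNPP => N2; apply: N; exists f, g; do !split=> //; lia.
have := lenD Efg; rewrite Eh => Lh.
have [lf [Cf Ef]] := IH f ltac:(lia).
have [lg [Cg Eg]] := IH g ltac:(lia).
have Hs : hs h = hs f by rewrite -Eh hcat_s.
have Pe : @path_end atom_graph (hs f) lf = hs g by rewrite -(path_hor_t Cf) Ef.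
exists (lf ++ lg); rewrite Hs; split; first by apply: chain_app Cf _; rewrite Pe.
by rewrite path_hor_app ?Pe // Ef Eg.
Qed.

Lemma free_of_length : free_category (UH A).
Proof.
exists atom_graph, id, (fun p : gpath atom_graph => path_hor (pstart p) (pedges p)).
have Fs (p : gpath atom_graph) : hs (path_hor (pstart p) (pedges p)) = pstart p.
  exact: path_hor_s (pchain p).
split=> //=.
- by move=> p; exact: path_hor_t (pchain p).
- move=> p q e e'; rewrite /= path_hor_app; first by rewrite hcatE e.
  + exact: pchain.
  + by rewrite e; exact: pchain.
- split; first by exists id.
  apply: inj_surj_bij.
  + move=> p q E; have Es : pstart p = pstart q by rewrite -Fs E Fs.
    apply: gpath_eq => //; apply: (path_hor_inj (pchain p)); last by rewrite {2}Es.
    by rewrite Es; exact: pchain.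
  + by move=> h; have [l [C E]] := atom_factorisation (le_n (len h)); exists (Build_gpath C).
Qed.
End FreenessCriterion.

(* Objects of R(A) are those of A together with two fresh objects
   (u,false), (u,true) for each vertical morphism u of A; they lie over the
   objects of A via [ob_proj].  A horizontal morphism is a word of composable
   horizontal morphisms of A with endpoints in R(A) lying over its ends, and
   composition is concatenation.  The vertical morphisms are the identities and
   a copy (u,false) -> (u,true) of each vertical morphism u of A.  A square is a
   square of A together with a boundary in R(A) lying over its boundary. *)
Section Resolution.
Variable A : DblCat.

Definition RObj := (Ob A + Ver A * bool)%type.

Definition ob_proj (o : RObj) : Ob A :=
  match o with inl x => x | inr (u, b) => if b then vt u else vs u end.

Record ResHor := ResH {
  rh_src : RObj; rh_word : list (Hor A); rh_tgt : RObj;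
  rh_walk : hwalk (ob_proj rh_src) rh_word (ob_proj rh_tgt) }.

Lemma res_hor_eq (f g : ResHor) :
  rh_src f = rh_src g -> rh_word f = rh_word g -> rh_tgt f = rh_tgt g -> f = g.
Proof.
case: f g => [x l y W] [x' l' y' W'] /= E1 E2 E3; subst.
by rewrite (proof_irrelevance _ W W').
Qed.

Definition res_hid (x : RObj) : ResHor := @ResH x nil x erefl.

Lemma res_hcomp_walk (f g : ResHor) : rh_tgt f = rh_src g ->
  hwalk (ob_proj (rh_src f)) (rh_word f ++ rh_word g) (ob_proj (rh_tgt g)).
Proof. by move=> e; apply: hwalk_app (rh_walk f) _; rewrite e; exact: rh_walk. Qed.

Definition res_hcomp (f g : ResHor) (e : rh_tgt f = rh_src g) : ResHor :=
  ResH (res_hcomp_walk e).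

Lemma res_hcomp_pi f g (e e' : rh_tgt f = rh_src g) : res_hcomp e = res_hcomp e'.
Proof. by rewrite (proof_irrelevance _ e e'). Qed.

Definition hor_proj (f : ResHor) : Hor A := hcat_word (ob_proj (rh_src f)) (rh_word f).

Lemma hor_proj_s f : hs (hor_proj f) = ob_proj (rh_src f).
Proof. exact: hcat_word_s (rh_walk f). Qed.

Lemma hor_proj_t f : ht (hor_proj f) = ob_proj (rh_tgt f).
Proof. exact: hcat_word_t (rh_walk f). Qed.

Lemma hor_proj_comp f g (e : rh_tgt f = rh_src g) :
  hor_proj (res_hcomp e) = hcat (hor_proj f) (hor_proj g).
Proof.
have W : hwalk (ob_proj (rh_tgt f)) (rh_word g) (ob_proj (rh_tgt g)).
  by rewrite e; exact: rh_walk.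
by rewrite /hor_proj /= (hcat_word_app (rh_walk f) W) e.
Qed.

Definition ResVer := (RObj + Ver A)%type.

Definition rv_src (u : ResVer) : RObj := match u with inl o => o | inr u => inr (u, false) end.
Definition rv_tgt (u : ResVer) : RObj := match u with inl o => o | inr u => inr (u, true) end.

(* Two copies are never composable, so a composite has an identity factor. *)
Definition res_vcomp (u v : ResVer) : ResVer := if u is inl _ then v else u.

Definition ver_proj (u : ResVer) : Ver A := match u with inl o => vid (ob_proj o) | inr u => u end.

Lemma ver_proj_s u : vs (ver_proj u) = ob_proj (rv_src u).
Proof. by case: u => [o|u] //=; rewrite vid_s. Qed.

Lemma ver_proj_t u : vt (ver_proj u) = ob_proj (rv_tgt u).
Proof. by case: u => [o|u] //=; rewrite vid_t. Qed.

Lemma res_vcomp_copy w v : rv_tgt (inr w) = rv_src v -> v = inl (rv_tgt (inr w)).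
Proof. by case: v => [o|v] //= ->. Qed.

Lemma res_vcomp_s u v : rv_tgt u = rv_src v -> rv_src (res_vcomp u v) = rv_src u.
Proof. by case: u. Qed.

Lemma res_vcomp_t u v : rv_tgt u = rv_src v -> rv_tgt (res_vcomp u v) = rv_tgt v.
Proof. by case: u => [o|u] //= /res_vcomp_copy ->. Qed.

Lemma ver_proj_comp u v : rv_tgt u = rv_src v ->
  ver_proj (res_vcomp u v) = vcat (ver_proj u) (ver_proj v).
Proof.
case: u => [o|u] /= e; first by rewrite vcat_idl // ver_proj_s e.
by rewrite (res_vcomp_copy e) /= vcat_idr.
Qed.

Record ResSq := ResS {
  rs_top : ResHor; rs_bot : ResHor; rs_left : ResVer; rs_right : ResVer;
  rs_base : Sq A;
  rs_tl : rh_src rs_top = rv_src rs_left;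
  rs_tr : rh_tgt rs_top = rv_src rs_right;
  rs_bl : rh_src rs_bot = rv_tgt rs_left;
  rs_br : rh_tgt rs_bot = rv_tgt rs_right;
  rs_base_t : st rs_base = hor_proj rs_top;
  rs_base_b : sb rs_base = hor_proj rs_bot;
  rs_base_l : sl rs_base = ver_proj rs_left;
  rs_base_r : sr rs_base = ver_proj rs_right }.

Lemma res_sq_eq (a b : ResSq) : rs_top a = rs_top b -> rs_bot a = rs_bot b ->
  rs_left a = rs_left b -> rs_right a = rs_right b -> rs_base a = rs_base b -> a = b.
Proof.
case: a b => [? ? ? ? ? ? ? ? ? ? ? ? ?] [? ? ? ? ? ? ? ? ? ? ? ? ?] /= E1 E2 E3 E4 E5.
by subst; f_equal; apply: proof_irrelevance.
Qed.

Definition res_hsq_id (u : ResVer) : ResSq.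
Proof.
refine (@ResS (res_hid (rv_src u)) (res_hid (rv_tgt u)) u u (hsq_id (ver_proj u))
          erefl erefl erefl erefl _ _ _ _).
- by rewrite hsq_id_t ver_proj_s.
- by rewrite hsq_id_b ver_proj_t.
- exact: hsq_id_l.
- exact: hsq_id_r.
Defined.

Definition res_vsq_id (f : ResHor) : ResSq.
Proof.
refine (@ResS f f (inl (rh_src f)) (inl (rh_tgt f)) (vsq_id (hor_proj f))
          erefl erefl erefl erefl _ _ _ _).
- exact: vsq_id_t.
- exact: vsq_id_b.
- by rewrite vsq_id_l hor_proj_s.
- by rewrite vsq_id_r hor_proj_t.
Defined.

Lemma res_hsq_comp_top a b : rs_right a = rs_left b -> rh_tgt (rs_top a) = rh_src (rs_top b).
Proof. by move=> e; rewrite rs_tr e rs_tl. Qed.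

Lemma res_hsq_comp_bot a b : rs_right a = rs_left b -> rh_tgt (rs_bot a) = rh_src (rs_bot b).
Proof. by move=> e; rewrite rs_br e rs_bl. Qed.

Lemma res_hsq_comp_base a b : rs_right a = rs_left b -> sr (rs_base a) = sl (rs_base b).
Proof. by move=> e; rewrite rs_base_r rs_base_l e. Qed.

Definition res_hsq_comp (a b : ResSq) (e : rs_right a = rs_left b) : ResSq.
Proof.
refine (@ResS (res_hcomp (res_hsq_comp_top e)) (res_hcomp (res_hsq_comp_bot e))
          (rs_left a) (rs_right b) (sq_hcat (rs_base a) (rs_base b))
          (rs_tl a) (rs_tr b) (rs_bl a) (rs_br b) _ _ _ _);
  have eS := res_hsq_comp_base e.
- by rewrite sq_hcat_t // hor_proj_comp !rs_base_t.
- by rewrite sq_hcat_b // hor_proj_comp !rs_base_b.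
- by rewrite sq_hcat_l // rs_base_l.
- by rewrite sq_hcat_r // rs_base_r.
Defined.

Lemma res_vsq_comp_left a b : rs_bot a = rs_top b -> rv_tgt (rs_left a) = rv_src (rs_left b).
Proof. by move=> e; rewrite -rs_bl e rs_tl. Qed.

Lemma res_vsq_comp_right a b : rs_bot a = rs_top b -> rv_tgt (rs_right a) = rv_src (rs_right b).
Proof. by move=> e; rewrite -rs_br e rs_tr. Qed.

Lemma res_vsq_comp_base a b : rs_bot a = rs_top b -> sb (rs_base a) = st (rs_base b).
Proof. by move=> e; rewrite rs_base_b rs_base_t e. Qed.

Definition res_vsq_comp (a b : ResSq) (e : rs_bot a = rs_top b) : ResSq.
Proof.
refine (@ResS (rs_top a) (rs_bot b) (res_vcomp (rs_left a) (rs_left b))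
          (res_vcomp (rs_right a) (rs_right b)) (sq_vcat (rs_base a) (rs_base b)) _ _ _ _ _ _ _ _);
  have eL := res_vsq_comp_left e; have eR := res_vsq_comp_right e;
  have eS := res_vsq_comp_base e.
- by rewrite res_vcomp_s // rs_tl.
- by rewrite res_vcomp_s // rs_tr.
- by rewrite res_vcomp_t // rs_bl.
- by rewrite res_vcomp_t // rs_br.
- by rewrite sq_vcat_t // rs_base_t.
- by rewrite sq_vcat_b // rs_base_b.
- by rewrite sq_vcat_l // ver_proj_comp // !rs_base_l.
- by rewrite sq_vcat_r // ver_proj_comp // !rs_base_r.
Defined.

Lemma res_hcomp_idl f (e : rh_tgt (res_hid (rh_src f)) = rh_src f) : res_hcomp e = f.
Proof. exact: res_hor_eq. Qed.

Lemma res_hcomp_idr f (e : rh_tgt f = rh_src (res_hid (rh_tgt f))) : res_hcomp e = f.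
Proof. by apply: res_hor_eq => //=; rewrite app_nil_r. Qed.

Lemma res_hcomp_assoc f g h (e1 : rh_tgt f = rh_src g) (e2 : rh_tgt (res_hcomp e1) = rh_src h)
  (e3 : rh_tgt g = rh_src h) (e4 : rh_tgt f = rh_src (res_hcomp e3)) :
  res_hcomp e2 = res_hcomp e4.
Proof. by apply: res_hor_eq => //=; rewrite app_assoc. Qed.

Lemma res_vcomp_idr u : res_vcomp u (inl (rv_tgt u)) = u.
Proof. by case: u. Qed.

Lemma res_vcomp_assoc u v w : res_vcomp (res_vcomp u v) w = res_vcomp u (res_vcomp v w).
Proof. by case: u. Qed.

Lemma res_hsq_comp_idl a (e : rs_right (res_hsq_id (rs_left a)) = rs_left a) :
  res_hsq_comp e = a.
Proof.
apply: res_sq_eq => //=.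
- by apply: res_hor_eq; rewrite //= rs_tl.
- by apply: res_hor_eq; rewrite //= rs_bl.
- by rewrite -rs_base_l sq_hcat_idl.
Qed.

Lemma res_hsq_comp_idr a (e : rs_right a = rs_left (res_hsq_id (rs_right a))) :
  res_hsq_comp e = a.
Proof.
apply: res_sq_eq => //=.
- by apply: res_hor_eq; rewrite /= ?app_nil_r ?rs_tr.
- by apply: res_hor_eq; rewrite /= ?app_nil_r ?rs_br.
- by rewrite -rs_base_r sq_hcat_idr.
Qed.

Lemma res_vsq_comp_idl a (e : rs_bot (res_vsq_id (rs_top a)) = rs_top a) :
  res_vsq_comp e = a.
Proof. by apply: res_sq_eq => //=; rewrite -rs_base_t sq_vcat_idl. Qed.

Lemma res_vsq_comp_idr a (e : rs_bot a = rs_top (res_vsq_id (rs_bot a))) :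
  res_vsq_comp e = a.
Proof.
apply: res_sq_eq => //=.
- by rewrite rs_bl res_vcomp_idr.
- by rewrite rs_br res_vcomp_idr.
- by rewrite -rs_base_b sq_vcat_idr.
Qed.

Lemma res_hsq_comp_assoc a b c (e1 : rs_right a = rs_left b)
  (e2 : rs_right (res_hsq_comp e1) = rs_left c) (e3 : rs_right b = rs_left c)
  (e4 : rs_right a = rs_left (res_hsq_comp e3)) : res_hsq_comp e2 = res_hsq_comp e4.
Proof.
apply: res_sq_eq => //=; try by apply: res_hor_eq => //=; rewrite app_assoc.
by apply: sq_hcat_assoc; apply: res_hsq_comp_base.
Qed.

Lemma res_vsq_comp_assoc a b c (e1 : rs_bot a = rs_top b)
  (e2 : rs_bot (res_vsq_comp e1) = rs_top c) (e3 : rs_bot b = rs_top c)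
  (e4 : rs_bot a = rs_top (res_vsq_comp e3)) : res_vsq_comp e2 = res_vsq_comp e4.
Proof.
apply: res_sq_eq; rewrite //= ?res_vcomp_assoc //.
by apply: sq_vcat_assoc; apply: res_vsq_comp_base.
Qed.

Lemma res_id_id x : res_hsq_id (inl x) = res_vsq_id (res_hid x).
Proof. by apply: res_sq_eq => //=; rewrite id_id. Qed.

Lemma res_hsq_id_vcomp u v (e : rv_tgt u = rv_src v)
  (e' : rs_bot (res_hsq_id u) = rs_top (res_hsq_id v)) :
  res_hsq_id (res_vcomp u v) = res_vsq_comp e'.
Proof.
apply: res_sq_eq => /=.
- by rewrite res_vcomp_s.
- by rewrite res_vcomp_t.
- by [].
- by [].
- by rewrite ver_proj_comp // hsq_id_vcat // ver_proj_t ver_proj_s e.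
Qed.

Lemma res_vsq_id_hcomp f g (e : rh_tgt f = rh_src g)
  (e' : rs_right (res_vsq_id f) = rs_left (res_vsq_id g)) :
  res_vsq_id (res_hcomp e) = res_hsq_comp e'.
Proof.
apply: res_sq_eq => //=; try exact: res_hcomp_pi.
by rewrite hor_proj_comp vsq_id_hcat // hor_proj_t hor_proj_s e.
Qed.

Lemma res_interchange a b c d (e1 : rs_right a = rs_left b) (e2 : rs_right c = rs_left d)
  (e3 : rs_bot a = rs_top c) (e4 : rs_bot b = rs_top d)
  (e5 : rs_bot (res_hsq_comp e1) = rs_top (res_hsq_comp e2))
  (e6 : rs_right (res_vsq_comp e3) = rs_left (res_vsq_comp e4)) :
  res_vsq_comp e5 = res_hsq_comp e6.
Proof.
apply: res_sq_eq => //=; try exact: res_hcomp_pi.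
by apply: sq_interchange; apply: res_hsq_comp_base || apply: res_vsq_comp_base.
Qed.

Definition Resolution : DblCat := {|
  Ob := RObj; Hor := ResHor; hs := rh_src; ht := rh_tgt; hid := res_hid; hcomp := res_hcomp;
  Ver := ResVer; vs := rv_src; vt := rv_tgt; vid := inl;
  vcomp := fun u v _ => res_vcomp u v;
  Sq := ResSq; sl := rs_left; sr := rs_right; st := rs_top; sb := rs_bot;
  hsq_id := res_hsq_id; vsq_id := res_vsq_id; hsq_comp := res_hsq_comp;
  vsq_comp := res_vsq_comp;
  sq_tl := rs_tl; sq_tr := rs_tr; sq_bl := rs_bl; sq_br := rs_br;
  hid_s := fun _ => erefl; hid_t := fun _ => erefl;
  hcomp_s := fun _ _ _ => erefl; hcomp_t := fun _ _ _ => erefl;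
  hcomp_id_l := res_hcomp_idl; hcomp_id_r := res_hcomp_idr; hcomp_assoc := res_hcomp_assoc;
  vid_s := fun _ => erefl; vid_t := fun _ => erefl;
  vcomp_s := res_vcomp_s; vcomp_t := res_vcomp_t;
  vcomp_id_l := fun _ _ => erefl; vcomp_id_r := fun u _ => res_vcomp_idr u;
  vcomp_assoc := fun u v w _ _ _ _ => res_vcomp_assoc u v w;
  hsq_id_l := fun _ => erefl; hsq_id_r := fun _ => erefl;
  hsq_id_t := fun _ => erefl; hsq_id_b := fun _ => erefl;
  vsq_id_l := fun _ => erefl; vsq_id_r := fun _ => erefl;
  vsq_id_t := fun _ => erefl; vsq_id_b := fun _ => erefl;
  hsq_comp_l := fun _ _ _ => erefl; hsq_comp_r := fun _ _ _ => erefl;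
  hsq_comp_t := fun _ _ _ _ => res_hcomp_pi _ _; hsq_comp_b := fun _ _ _ _ => res_hcomp_pi _ _;
  vsq_comp_t := fun _ _ _ => erefl; vsq_comp_b := fun _ _ _ => erefl;
  vsq_comp_l := fun _ _ _ _ => erefl; vsq_comp_r := fun _ _ _ _ => erefl;
  hsq_comp_id_l := res_hsq_comp_idl; hsq_comp_id_r := res_hsq_comp_idr;
  hsq_comp_assoc := res_hsq_comp_assoc;
  vsq_comp_id_l := res_vsq_comp_idl; vsq_comp_id_r := res_vsq_comp_idr;
  vsq_comp_assoc := res_vsq_comp_assoc;
  id_id := res_id_id; hsq_id_vcomp := res_hsq_id_vcomp; vsq_id_hcomp := res_vsq_id_hcomp;
  Defs.interchange := res_interchange |}.

Definition res_proj : DblFunctor Resolution A.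
Proof.
refine (@Build_DblFunctor Resolution A ob_proj hor_proj ver_proj rs_base
  hor_proj_s hor_proj_t ver_proj_s ver_proj_t rs_base_l rs_base_r rs_base_t rs_base_b
  (fun x => erefl) _ (fun x => erefl) _ (fun u => erefl) (fun f => erefl) _ _) => /=.
- by move=> f g e e'; rewrite hor_proj_comp hcatE.
- by move=> u v e e'; rewrite ver_proj_comp // vcatE.
- by move=> a b e e'; rewrite sq_hcatE.
- by move=> a b e e'; rewrite sq_vcatE.
Defined.

(* Every horizontal morphism of A lifts as a one-letter word, every vertical one
   as its copy, and squares lift uniquely since they are part of the data. *)
Lemma res_proj_trivial_fibration : trivial_fibration res_proj.
Proof.
split; [|split; [|split]].
- by move=> y; exists (inl y).
- move=> x x' g /= E1 E2.
  have W : hwalk (ob_proj x) (g :: nil) (ob_proj x') by [].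
  by exists (ResH W); split=> //; rewrite /hor_proj /= hcat_idr.
- by move=> v; exists (inr v).
- move=> f f' u u' b /= E1 E2 E3 E4 E5 E6 E7 E8.
  exists (ResS E1 E2 E3 E4 E5 E6 E7 E8); split=> // a' [F1 F2 F3 F4 F5].
  exact: res_sq_eq.
Qed.
End Resolution.

(* A section S of the resolution (a lift of the identity of A) assigns to
   every horizontal morphism a word, compatibly with composition, and to every
   non-trivial vertical morphism its own copy. *)
Section SectionOfResolution.
Variables (A : DblCat) (S : DblFunctor A (Resolution A)).
Hypothesis S_ob : forall x, ob_proj (fO S x) = x.
Hypothesis S_hor : forall f, hor_proj (fH S f) = f.
Hypothesis S_ver : forall u, ver_proj (fV S u) = u.

Lemma S_hs h : rh_src (fH S h) = fO S (hs h). Proof. exact: (fH_s S h). Qed.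
Lemma S_ht h : rh_tgt (fH S h) = fO S (ht h). Proof. exact: (fH_t S h). Qed.

Definition word (h : Hor A) : list (Hor A) := rh_word (fH S h).

Lemma word_walk h : hwalk (hs h) (word h) (ht h).
Proof. by have := rh_walk (fH S h); rewrite S_hs S_ht !S_ob. Qed.

Lemma word_compose h : hcat_word (hs h) (word h) = h.
Proof. by have := S_hor h; rewrite /hor_proj S_hs S_ob. Qed.

Lemma word_hcat (f g : Hor A) : ht f = hs g -> word (hcat f g) = word f ++ word g.
Proof.
move=> e; have e' : rh_tgt (fH S f) = rh_src (fH S g) by rewrite S_ht S_hs e.
by rewrite -(hcatE e) /word (@fH_comp _ _ S f g e e').
Qed.

Definition word_len (h : Hor A) : nat := length (word h).

Lemma word_len0 h : word_len h = 0 -> h = hid (hs h).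
Proof. by move/length_zero_iff_nil=> E; rewrite -{1}(word_compose h) E. Qed.

Lemma word_lenD (f g : Hor A) : ht f = hs g -> word_len (hcat f g) = word_len f + word_len g.
Proof. by move=> e; rewrite /word_len word_hcat // length_app. Qed.

Lemma word_prefix (f f' : Hor A) r : hs f = hs f' -> word f = word f' ++ r ->
  exists c, hs c = ht f' /\ f = hcat f' c.
Proof.
move=> Hs Er; have W := word_walk f; rewrite Er Hs in W.
have [b [W1 W2]] := hwalk_split W; have Eb := hwalk_det W1 (word_walk f'); subst b.
exists (hcat_word (ht f') r); split; first exact: hcat_word_s W2.
by rewrite -{1}(word_compose f) Er Hs (hcat_word_app W1 W2) word_compose.
Qed.

Lemma word_factor_cmp (f g f' g' : Hor A) :
  ht f = hs g -> ht f' = hs g' -> hcat f g = hcat f' g' ->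
  (exists c, hs c = ht f' /\ f = hcat f' c) \/ (exists c, hs c = ht f /\ f' = hcat f c).
Proof.
move=> e1 e2 E; have Hs : hs f = hs f' by rewrite -(hcat_s e1) E hcat_s.
have := f_equal word E; rewrite !word_hcat // => /app_eq_app [r [[E1 _]|[E1 _]]].
- by left; exact: word_prefix E1.
- by right; exact: word_prefix (esym Hs) E1.
Qed.

Lemma word_cancel (f g g' : Hor A) :
  ht f = hs g -> ht f = hs g' -> hcat f g = hcat f g' -> g = g'.
Proof.
move=> e1 e2 E; have := f_equal word E; rewrite !word_hcat // => /app_inv_head Eg.
by rewrite -(word_compose g) -(word_compose g') Eg -e1 -e2.
Qed.

Lemma section_free : free_category (UH A).
Proof.
exact: (free_of_length word_len0 word_lenD word_factor_cmp word_cancel).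
Qed.

(* A non-trivial vertical morphism cannot lift to an identity, so it lifts to
   its copy, whose endpoints are fresh. *)
Lemma section_nonid (u : Ver A) : nonid u -> fV S u = inr u.
Proof.
move=> N; have := S_ver u; case: (fV S u) (fV_s S u) => [o|w] /= Es Eu; last by rewrite Eu.
by case: N; rewrite -Eu vid_s.
Qed.

Lemma section_isolated : isolated_vertical A.
Proof.
have src (u : Ver A) : nonid u -> fO S (vs u) = inr (u, false).
  by move=> N; rewrite -(fV_s S u) section_nonid.
have tgt (u : Ver A) : nonid u -> fO S (vt u) = inr (u, true).
  by move=> N; rewrite -(fV_t S u) section_nonid.
split=> u v Nu Nv E.
- by have := tgt u Nu; rewrite E src.
- by have := src u Nu; rewrite E src // => -[].
- by have := tgt u Nu; rewrite E tgt // => -[].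
Qed.
End SectionOfResolution.

Definition id_functor (A : DblCat) : DblFunctor A A.
Proof.
refine (@Build_DblFunctor A A id id id id (fun _ => erefl) (fun _ => erefl)
  (fun _ => erefl) (fun _ => erefl) (fun _ => erefl) (fun _ => erefl) (fun _ => erefl)
  (fun _ => erefl) (fun _ => erefl) _ (fun _ => erefl) _ (fun _ => erefl)
  (fun _ => erefl) _ _) => /= ? ? e e'; by rewrite (proof_irrelevance _ e e').
Defined.

(* Cofibrancy implies the two conditions: lift the identity of A along the
   trivial fibration R(A) -> A. *)
Lemma cofibrant_conditions (A : DblCat) :
  cofibrant A -> free_category (UH A) /\ isolated_vertical A.
Proof.
move=> cofA.
have [S [S_ob S_hor S_ver _]] :=
  cofA _ _ _ (res_proj_trivial_fibration A) (id_functor A).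
split; [exact: section_free S_ob S_hor | exact: section_isolated S_ver].
Qed.

Section Lifting.
Variables (A X Y : DblCat) (P : DblFunctor X Y) (F : DblFunctor A Y).
Hypothesis P_ob_surj : forall y : Ob Y, exists x : Ob X, fO P x = y.
Hypothesis P_hor_full : forall (x x' : Ob X) (g : Hor Y), hs g = fO P x -> ht g = fO P x' ->
  exists f : Hor X, [/\ hs f = x, ht f = x' & fH P f = g].
Hypothesis P_ver_surj : forall v : Ver Y, exists u : Ver X, fV P u = v.
Hypothesis P_sq_ff : forall (f f' : Hor X) (u u' : Ver X) (b : Sq Y),
  hs f = vs u -> ht f = vs u' -> hs f' = vt u -> ht f' = vt u' ->
  st b = fH P f -> sb b = fH P f' -> sl b = fV P u -> sr b = fV P u' ->
  exists! a : Sq X, [/\ st a = f, sb a = f', sl a = u, sr a = u' & fS P a = b].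
Hypothesis isoA : isolated_vertical A.

(* Vertical morphisms and objects.  A non-trivial vertical morphism gets an
   arbitrary lift; its endpoints then determine the lifts of objects. *)
Definition ver_lift (u : Ver A) : Ver X := choose (P_ver_surj (fV F u)).

Lemma ver_liftP u : fV P (ver_lift u) = fV F u.
Proof. exact: (chooseP (P_ver_surj (fV F u))). Qed.

Definition in_ver (x : Ob A) : Ver A :=
  if excluded_middle_informative (has_in x) is left H then choose H else vid x.

Lemma in_ver_spec x : has_in x -> nonid (in_ver x) /\ vt (in_ver x) = x.
Proof. by rewrite /in_ver; case: excluded_middle_informative => // H _; exact: (chooseP H). Qed.

Lemma in_ver_eq u : nonid u -> in_ver (vt u) = u.
Proof.
move=> N; have [N' E] := in_ver_spec (ex_intro _ u (conj N erefl)).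
exact: nonid_tgt_inj isoA _ _ N' N E.
Qed.

Definition ob_lift (x : Ob A) : Ob X :=
  if excluded_middle_informative (has_out x) is left _ then vs (ver_lift (out_ver x))
  else if excluded_middle_informative (has_in x) is left _ then vt (ver_lift (in_ver x))
  else choose (P_ob_surj (fO F x)).

Lemma ob_lift_s u : nonid u -> ob_lift (vs u) = vs (ver_lift u).
Proof.
move=> N; rewrite /ob_lift; case: excluded_middle_informative => [_|[]].
- by rewrite (out_ver_eq isoA N).
- by exists u.
Qed.

Lemma ob_lift_t u : nonid u -> ob_lift (vt u) = vt (ver_lift u).
Proof.
move=> N; rewrite /ob_lift; case: excluded_middle_informative => [[v [Nv Ev]]|_].
  by case: (nonid_not_composable isoA N Nv (esym Ev)).
case: excluded_middle_informative => [_|[]]; first by rewrite in_ver_eq.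
by exists u.
Qed.

Lemma ob_liftP x : fO P (ob_lift x) = fO F x.
Proof.
rewrite /ob_lift; case: excluded_middle_informative => [H|_].
  by have [_ E] := out_ver_spec H; rewrite -(fV_s P) ver_liftP fV_s E.
case: excluded_middle_informative => [H|_]; last exact: (chooseP (P_ob_surj (fO F x))).
by have [_ E] := in_ver_spec H; rewrite -(fV_t P) ver_liftP fV_t E.
Qed.

Definition vlift (u : Ver A) : Ver X :=
  if excluded_middle_informative (nonid u) is left _ then ver_lift u else vid (ob_lift (vs u)).

Lemma vlift_nonid u : nonid u -> vlift u = ver_lift u.
Proof. by rewrite /vlift; case: excluded_middle_informative. Qed.

Lemma vlift_id u : ~ nonid u -> vlift u = vid (ob_lift (vs u)).
Proof. by rewrite /vlift; case: excluded_middle_informative. Qed.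

Lemma vlift_s u : vs (vlift u) = ob_lift (vs u).
Proof.
case: (classic (nonid u)) => N; first by rewrite vlift_nonid // ob_lift_s.
by rewrite vlift_id // vid_s.
Qed.

Lemma vlift_t u : vt (vlift u) = ob_lift (vt u).
Proof.
case: (classic (nonid u)) => N; first by rewrite vlift_nonid // ob_lift_t.
by rewrite vlift_id // vid_t not_nonid_t.
Qed.

Lemma vliftP u : fV P (vlift u) = fV F u.
Proof.
case: (classic (nonid u)) => N; first by rewrite vlift_nonid // ver_liftP.
by rewrite vlift_id // fV_id ob_liftP -fV_id -not_nonid.
Qed.

Lemma vlift_vid x : vlift (vid x) = vid (ob_lift x).
Proof. by rewrite vlift_id ?vid_s // /nonid vid_s. Qed.

(* Since non-trivial morphisms are not composable, a composite has an
   identity factor. *)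
Lemma vlift_vcat u v : vt u = vs v -> vlift (vcat u v) = vcat (vlift u) (vlift v).
Proof.
move=> e; case: (classic (nonid u)) => Nu.
- case: (classic (nonid v)) => Nv; first by case: (nonid_not_composable isoA Nu Nv e).
  have -> : v = vid (vt u) by rewrite e; exact: not_nonid.
  by rewrite vcat_idr // vlift_vid vcat_idr // vlift_t.
- have -> : u = vid (vs v) by rewrite -e not_nonid_t // -not_nonid.
  by rewrite vcat_idl // vlift_vid vcat_idl // vlift_s.
Qed.

(* U H A is free on a graph [G]: each generating edge
   gets a lift between the lifted endpoints (P is full on horizontal
   morphisms), and a path lifts to the composite of the lifts of its edges. *)
Variables (G : Graph) (Fo : gV G -> Ob A) (Fm : gpath G -> Hor A).
Hypothesis Fm_s : forall p, hs (Fm p) = Fo (pstart p).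
Hypothesis Fm_t : forall p, ht (Fm p) = Fo (path_end (pstart p) (pedges p)).
Hypothesis Fm_id : forall v, Fm (@Build_gpath G v nil Logic.I) = hid (Fo v).
Hypothesis Fm_comp : forall (p q : gpath G) (e : path_end (pstart p) (pedges p) = pstart q) e',
  Fm (path_comp e) = @hcomp A (Fm p) (Fm q) e'.
Hypothesis Fo_bij : bijective Fo.
Hypothesis Fm_bij : bijective Fm.

Definition edge_path (e : gE G) : gpath G :=
  @Build_gpath G (gsrc e) (e :: nil) (conj erefl Logic.I).

Lemma edge_lift_ex e : exists f : Hor X, [/\ hs f = ob_lift (Fo (gsrc e)),
  ht f = ob_lift (Fo (gtgt e)) & fH P f = fH F (Fm (edge_path e))].
Proof. by apply: P_hor_full; rewrite ?fH_s ?fH_t ob_liftP ?Fm_s ?Fm_t. Qed.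

Definition edge_lift (e : gE G) : Hor X := choose (edge_lift_ex e).

Lemma edge_liftP e : [/\ hs (edge_lift e) = ob_lift (Fo (gsrc e)),
  ht (edge_lift e) = ob_lift (Fo (gtgt e)) & fH P (edge_lift e) = fH F (Fm (edge_path e))].
Proof. exact: (chooseP (edge_lift_ex e)). Qed.

Definition path_lift (v : gV G) (l : list (gE G)) : Hor X :=
  hcat_word (ob_lift (Fo v)) (map edge_lift l).

Lemma path_lift_walk v l : chain v l ->
  hwalk (ob_lift (Fo v)) (map edge_lift l) (ob_lift (Fo (path_end v l))).
Proof.
apply: (chain_hwalk (vo := fun v => ob_lift (Fo v))) => e; by case: (edge_liftP e).
Qed.

Lemma path_liftP (p : gpath G) : fH P (path_lift (pstart p) (pedges p)) = fH F (Fm p).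
Proof.
case: p => v l c /=; elim: l v c => [|e l IH] v c /=.
  have -> : Build_gpath c = Build_gpath (I : chain v nil) by apply: gpath_eq.
  by rewrite Fm_id /path_lift /= !fH_id ob_liftP.
case: c => E c; have [Se Te Pe] := edge_liftP e.
have ep : path_end (pstart (edge_path e)) (pedges (edge_path e)) = pstart (Build_gpath c) by [].
have e' : ht (Fm (edge_path e)) = hs (Fm (Build_gpath c)) by rewrite Fm_s Fm_t.
have -> : @Build_gpath G v (e :: l) (conj E c) = path_comp ep by apply: gpath_eq.
have -> : path_lift v (e :: l) = hcat (edge_lift e) (path_lift (gtgt e) l).
  by rewrite /path_lift /= Te.
have eX : ht (edge_lift e) = hs (path_lift (gtgt e) l).
  by rewrite Te (hcat_word_s (path_lift_walk c)).
by rewrite (Fm_comp ep e') hcatE (fH_hcat F e') (fH_hcat P eX) Pe (IH _ c).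
Qed.

Definition hlift (h : Hor A) : Hor X :=
  path_lift (pstart (bij_inv Fm_bij h)) (pedges (bij_inv Fm_bij h)).

Lemma FmK : cancel Fm (bij_inv Fm_bij). Proof. exact: (proj1 (bij_invK Fm_bij)). Qed.
Lemma FmiK : cancel (bij_inv Fm_bij) Fm. Proof. exact: (proj2 (bij_invK Fm_bij)). Qed.

Lemma hlift_s h : hs (hlift h) = ob_lift (hs h).
Proof. by rewrite /hlift (hcat_word_s (path_lift_walk (pchain _))) -Fm_s FmiK. Qed.

Lemma hlift_t h : ht (hlift h) = ob_lift (ht h).
Proof. by rewrite /hlift (hcat_word_t (path_lift_walk (pchain _))) -Fm_t FmiK. Qed.

Lemma hliftP h : fH P (hlift h) = fH F h.
Proof. by rewrite /hlift path_liftP FmiK. Qed.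

Lemma hlift_hid x : hlift (hid x) = hid (ob_lift x).
Proof.
have [FoK FoiK] := bij_invK Fo_bij; rewrite /hlift.
have -> : bij_inv Fm_bij (hid x) = @Build_gpath G (bij_inv Fo_bij x) nil Logic.I.
  by rewrite -[RHS]FmK Fm_id FoiK.
by rewrite /path_lift /= FoiK.
Qed.

Lemma hlift_hcat (f g : Hor A) : ht f = hs g -> hlift (hcat f g) = hcat (hlift f) (hlift g).
Proof.
move=> e; rewrite /hlift; set pf := bij_inv Fm_bij f; set pg := bij_inv Fm_bij g.
have ep : path_end (pstart pf) (pedges pf) = pstart pg.
  by apply: (bij_inj Fo_bij); rewrite -Fm_t -Fm_s !FmiK.
have e' : ht (Fm pf) = hs (Fm pg) by rewrite !FmiK.
have -> : bij_inv Fm_bij (hcat f g) = path_comp ep.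
  by rewrite -{1}(FmiK f) -{1}(FmiK g) -(hcatE e') -Fm_comp FmK.
have Wg : hwalk (ob_lift (Fo (path_end (pstart pf) (pedges pf)))) (map edge_lift (pedges pg))
                (ob_lift (Fo (path_end (pstart pg) (pedges pg)))).
  by rewrite ep; exact: path_lift_walk (pchain pg).
by rewrite /path_lift /= map_app (hcat_word_app (path_lift_walk (pchain pf)) Wg) ep.
Qed.

(* Squares: P is fully faithful on squares, so every square of A has a unique
   lift with the lifted boundary; uniqueness makes the lift functorial. *)
Lemma sq_lift_ex (a : Sq A) : exists! a' : Sq X,
  [/\ st a' = hlift (st a), sb a' = hlift (sb a), sl a' = vlift (sl a),
      sr a' = vlift (sr a) & fS P a' = fS F a].
Proof.
apply: P_sq_ff.
- by rewrite hlift_s vlift_s sq_tl.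
- by rewrite hlift_t vlift_s sq_tr.
- by rewrite hlift_s vlift_t sq_bl.
- by rewrite hlift_t vlift_t sq_br.
- by rewrite fS_t hliftP.
- by rewrite fS_b hliftP.
- by rewrite fS_l vliftP.
- by rewrite fS_r vliftP.
Qed.

Definition sq_lift (a : Sq A) : Sq X := choose (sq_lift_ex a).

Lemma sq_lift_spec a : [/\ st (sq_lift a) = hlift (st a), sb (sq_lift a) = hlift (sb a),
  sl (sq_lift a) = vlift (sl a), sr (sq_lift a) = vlift (sr a) & fS P (sq_lift a) = fS F a].
Proof. by have [] := chooseP (sq_lift_ex a). Qed.

Lemma sq_lift_unique a a' : st a' = hlift (st a) -> sb a' = hlift (sb a) ->
  sl a' = vlift (sl a) -> sr a' = vlift (sr a) -> fS P a' = fS F a -> sq_lift a = a'.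
Proof. by move=> *; have [_ U] := chooseP (sq_lift_ex a); apply: U; split. Qed.

Lemma sq_lift_hsq_id u : sq_lift (hsq_id u) = hsq_id (vlift u).
Proof.
apply: sq_lift_unique.
- by rewrite !hsq_id_t hlift_hid vlift_s.
- by rewrite !hsq_id_b hlift_hid vlift_t.
- by rewrite !hsq_id_l.
- by rewrite !hsq_id_r.
- by rewrite !fS_hid vliftP.
Qed.

Lemma sq_lift_vsq_id f : sq_lift (vsq_id f) = vsq_id (hlift f).
Proof.
apply: sq_lift_unique.
- by rewrite !vsq_id_t.
- by rewrite !vsq_id_b.
- by rewrite !vsq_id_l vlift_vid hlift_s.
- by rewrite !vsq_id_r vlift_vid hlift_t.
- by rewrite !fS_vid hliftP.
Qed.

Lemma sq_lift_hcat a b : sr a = sl b -> sq_lift (sq_hcat a b) = sq_hcat (sq_lift a) (sq_lift b).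
Proof.
move=> e; have [Ta Ba La Ra Pa] := sq_lift_spec a; have [Tb Bb Lb Rb Pb] := sq_lift_spec b.
have eT : ht (st a) = hs (st b) by rewrite sq_tr e sq_tl.
have eB : ht (sb a) = hs (sb b) by rewrite sq_br e sq_bl.
have eL : sr (sq_lift a) = sl (sq_lift b) by rewrite Ra Lb e.
apply: sq_lift_unique.
- by rewrite !sq_hcat_t // Ta Tb hlift_hcat.
- by rewrite !sq_hcat_b // Ba Bb hlift_hcat.
- by rewrite !sq_hcat_l.
- by rewrite !sq_hcat_r.
- by rewrite fS_sq_hcat // Pa Pb fS_sq_hcat.
Qed.

Lemma sq_lift_vcat a b : sb a = st b -> sq_lift (sq_vcat a b) = sq_vcat (sq_lift a) (sq_lift b).
Proof.
move=> e; have [Ta Ba La Ra Pa] := sq_lift_spec a; have [Tb Bb Lb Rb Pb] := sq_lift_spec b.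
have eL : vt (sl a) = vs (sl b) by rewrite -sq_bl e sq_tl.
have eR : vt (sr a) = vs (sr b) by rewrite -sq_br e sq_tr.
have eB : sb (sq_lift a) = st (sq_lift b) by rewrite Ba Tb e.
apply: sq_lift_unique.
- by rewrite !sq_vcat_t.
- by rewrite !sq_vcat_b.
- by rewrite !sq_vcat_l // La Lb vlift_vcat.
- by rewrite !sq_vcat_r // Ra Rb vlift_vcat.
- by rewrite fS_sq_vcat // Pa Pb fS_sq_vcat.
Qed.

Definition lift_functor : DblFunctor A X.
Proof.
refine (@Build_DblFunctor A X ob_lift hlift vlift sq_lift hlift_s hlift_t vlift_s vlift_t
  (fun a => let: And5 _ _ h _ _ := sq_lift_spec a in h)
  (fun a => let: And5 _ _ _ h _ := sq_lift_spec a in h)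
  (fun a => let: And5 h _ _ _ _ := sq_lift_spec a in h)
  (fun a => let: And5 _ h _ _ _ := sq_lift_spec a in h)
  hlift_hid _ vlift_vid _ sq_lift_hsq_id sq_lift_vsq_id _ _).
- by move=> f g e e'; rewrite !hcatE hlift_hcat.
- by move=> u v e e'; rewrite !vcatE vlift_vcat.
- by move=> a b e e'; rewrite !sq_hcatE sq_lift_hcat.
- by move=> a b e e'; rewrite !sq_vcatE sq_lift_vcat.
Defined.

Lemma lift_functor_lifts : [/\ forall x, fO P (fO lift_functor x) = fO F x,
  forall f, fH P (fH lift_functor f) = fH F f,
  forall u, fV P (fV lift_functor u) = fV F u &
  forall a, fS P (fS lift_functor a) = fS F a].
Proof.
by split; [exact: ob_liftP | exact: hliftP | exact: vliftP | move=> a; case: (sq_lift_spec a)].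
Qed.
End Lifting.

Lemma conditions_cofibrant (A : DblCat) :
  free_category (UH A) -> isolated_vertical A -> cofibrant A.
Proof.
case=> G [Fo [Fm [Fm_s Fm_t Fm_id Fm_comp [Fo_bij Fm_bij]]]] isoA.
move=> X Y P [P_ob [P_hor [P_ver P_sq]]] F.
eexists; exact: (lift_functor_lifts F P_ob P_hor P_ver P_sq isoA
                   Fm_s Fm_t Fm_id Fm_comp Fo_bij Fm_bij).
Qed.

Theorem proposition4p11 (A : DblCat) :
  cofibrant A <-> free_category (UH A) /\ disjoint_union_of_1_and_2 (UV A).
Proof.
rewrite sum12_iff_isolated; split.
- exact: cofibrant_conditions.
- by case; exact: conditions_cofibrant.
Qed.
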